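(* Let $P\in\Delta$ be such that the marginal distribution $p$ of $X$ has full support on $\mathcal X$. Then $\widetilde{UI}(X:Z\setminus Y)=0$ if and only if $Z$ has no unique information about $X$ with respect to $Y$, i.e. if and only if for every finite set $\mathcal A$ and every function $u:\mathcal X\times\mathcal A\to\mathbb R$ one has $R(\kappa,p,u)\ge R(\mu,p,u)$.
   Context: $X,Y,Z$ are random variables with finite state spaces $\mathcal X,\mathcal Y,\mathcal Z$ and joint distribution $P\in\Delta$, where $\Delta$ is the set of probability distributions on $\mathcal X\times\mathcal Y\times\mathcal Z$. $\Delta_P=\{Q\in\Delta: Q(X=x,Y=y)=P(X=x,Y=y)\text{ and }Q(X=x,Z=z)=P(X=x,Z=z)\ \forall x,y,z\}$, and $\widetilde{UI}(X:Z\setminus Y)=\min_{Q\in\Delta_P}MI_Q(X:Z|Y)$ (mutual information computed w.r.t. $Q$). Let $p(x)=P(X=x)$, and let $\kappa(x;y)=P(Y=y|X=x)$, $\mu(x;z)=P(Z=z|X=x)$ be the row-stochastic channel matrices. A decision problem consists of a finite action set $\mathcal A$ and a reward function $u:\mathcal X\times\mathcal A\to\mathbb R$. For a channel $\nu\in[0,1]^{\mathcal X\times\mathcal W}$ (to a finite set $\mathcal W$), the maximal expected reward is $R(\nu,p,u)=\sum_{w\in\mathcal W}\max_{a\in\mathcal A}\sum_{x\in\mathcal X}p(x)\nu(x;w)u(x,a)$, i.e. the expected reward of an agent who observes the output $w$ of the channel and then chooses an action maximizing the posterior expected reward $\sum_x P(X=x|W=w)u(x,a)$. *)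

From mathcomp Require Import all_boot.
From Stdlib Require Import Reals ClassicalEpsilon.

Set Implicit Arguments.
Unset Strict Implicit.
Unset Printing Implicit Defensive.

Definition rsum (T : finType) (f : T -> R) : R := \big[Rplus/R0]_(t : T) f t.

Definition rmax (T : finType) (a0 : T) (f : T -> R) : R :=
  \big[Rmax/f a0]_(t : T) f t.

Section Defs.
Variables (X Y Z : finType).

Definition is_dist (P : X -> Y -> Z -> R) : Prop :=
  (forall x y z, 0 <= P x y z)%R /\
  rsum (fun x => rsum (fun y => rsum (fun z => P x y z))) = 1%R.

Definition margXY (P : X -> Y -> Z -> R) (x : X) (y : Y) : R := rsum (fun z => P x y z).
Definition margXZ (P : X -> Y -> Z -> R) (x : X) (z : Z) : R := rsum (fun y => P x y z).
Definition margYZ (P : X -> Y -> Z -> R) (y : Y) (z : Z) : R := rsum (fun x => P x y z).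
Definition margX (P : X -> Y -> Z -> R) (x : X) : R := rsum (fun y => margXY P x y).
Definition margY (P : X -> Y -> Z -> R) (y : Y) : R := rsum (fun x => margXY P x y).

Definition DeltaP (P Q : X -> Y -> Z -> R) : Prop :=
  is_dist Q /\
  (forall x y, margXY Q x y = margXY P x y) /\
  (forall x z, margXZ Q x z = margXZ P x z).

(* conditional mutual information MI_Q(X:Z|Y), natural log, 0 log 0 = 0 *)
Definition condMI (Q : X -> Y -> Z -> R) : R :=
  rsum (fun x => rsum (fun y => rsum (fun z =>
    if Rlt_dec 0 (Q x y z) then
      (Q x y z * ln (Q x y z * margY Q y / (margXY Q x y * margYZ Q y z)))%R
    else 0%R))).

Definition is_UI_min (P : X -> Y -> Z -> R) (v : R) : Prop :=
  (exists Q, DeltaP P Q /\ condMI Q = v) /\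
  (forall Q, DeltaP P Q -> (v <= condMI Q)%R).

(* UI~(X : Z \ Y) = min_{Q in Delta_P} MI_Q(X:Z|Y) (the minimum is attained) *)
Definition UItilde (P : X -> Y -> Z -> R) : R :=
  epsilon (inhabits 0%R) (is_UI_min P).

Definition kappa (P : X -> Y -> Z -> R) (x : X) (y : Y) : R := (margXY P x y / margX P x)%R.
Definition mu (P : X -> Y -> Z -> R) (x : X) (z : Z) : R := (margXZ P x z / margX P x)%R.
End Defs.

Definition reward (X W A : finType) (a0 : A) (nu : X -> W -> R) (p : X -> R)
  (u : X -> A -> R) : R :=
  rsum (fun w => rmax a0 (fun a => rsum (fun x => (p x * nu x w * u x a)%R))).

From HB Require Import structures.
From mathcomp Require Import all_boot.
From Stdlib Require Import Reals Lra Lia Classical ClassicalEpsilon.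

Set Implicit Arguments.
Unset Strict Implicit.
Open Scope R_scope.

(* Both conditions are shown equivalent to: Z is a garbling of Y, i.e. there
   is a channel lam with P(x,z) = sum_y P(x,y) lam(y,z).

   - UI~ = 0 <-> garbling.  The minimum defining UI~ is attained (extreme
     value theorem on the compact set Delta_P, where condMI is continuous as
     a combination of sums of t ln t).  By the Gibbs inequality, condMI Q = 0
     exactly when X - Y - Z is a Markov chain under Q; such a Q in Delta_P
     yields the channel Q(z|y), and conversely P(x,y) lam(y,z) is a Markov
     chain in Delta_P.
   - garbling -> dominance: the Y-agent can simulate Z.
   - dominance -> garbling (Blackwell): take the channel ls whose garbled law
     is nearest to P(x,z) in Euclidean distance; the residual D, used as a
     utility with actions Z, shows by the obtuse-angle property of nearest
     points that |D|^2 <= 0. *)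

(* Real addition and multiplication as monoid laws, so that the generic
   bigop lemmas (splitting, exchange, distributivity) apply to [rsum]. *)
HB.instance Definition _ := Monoid.isComLaw.Build R R0 Rplus
  (fun x y z => esym (Rplus_assoc x y z)) Rplus_comm Rplus_0_l.
HB.instance Definition _ := Monoid.isComLaw.Build R R1 Rmult
  (fun x y z => esym (Rmult_assoc x y z)) Rmult_comm Rmult_1_l.
HB.instance Definition _ := Monoid.isMulLaw.Build R R0 Rmult Rmult_0_l Rmult_0_r.
HB.instance Definition _ := Monoid.isAddLaw.Build R Rmult Rplus
  Rmult_plus_distr_r Rmult_plus_distr_l.

Lemma rsum_ge0 (T : finType) (f : T -> R) : (forall t, 0 <= f t) -> 0 <= rsum f.
Proof.
move=> H; rewrite /rsum; apply: (big_ind (fun v => 0 <= v)) => //; [lra | move=> ???; lra].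
Qed.

Lemma rsum_le (T : finType) (f g : T -> R) : (forall t, f t <= g t) -> rsum f <= rsum g.
Proof.
move=> H; rewrite /rsum; apply: (big_ind2 (fun a b => a <= b)) => //; [lra | move=> ????; lra].
Qed.

Lemma rsum_eq (T : finType) (f g : T -> R) : (forall t, f t = g t) -> rsum f = rsum g.
Proof. by move=> H; rewrite /rsum; apply: eq_bigr => t _. Qed.

Lemma rsum_add (T : finType) (f g : T -> R) : rsum (fun t => f t + g t) = rsum f + rsum g.
Proof. by rewrite /rsum big_split. Qed.

Lemma rsum_scal (T : finType) (f : T -> R) c : rsum (fun t => c * f t) = c * rsum f.
Proof. by rewrite /rsum big_distrr. Qed.

Lemma rsum_scar (T : finType) (f : T -> R) c : rsum (fun t => f t * c) = rsum f * c.
Proof. by rewrite /rsum big_distrl. Qed.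

Lemma rsum_sub (T : finType) (f g : T -> R) : rsum (fun t => f t - g t) = rsum f - rsum g.
Proof.
rewrite (@rsum_eq _ _ (fun t => f t + (-1) * g t)); last by move=> t; ring.
by rewrite rsum_add rsum_scal; ring.
Qed.

Lemma rsum_0 (T : finType) : rsum (fun _ : T => 0) = 0.
Proof. by rewrite /rsum big1. Qed.

Lemma rsum_swap (T U : finType) (f : T -> U -> R) :
  rsum (fun t => rsum (f t)) = rsum (fun u => rsum (fun t => f t u)).
Proof. exact: exchange_big. Qed.

Lemma rsumD1 (T : finType) (f : T -> R) (a : T) :
  rsum f = f a + rsum (fun t => if t == a then 0 else f t).
Proof.
rewrite /rsum (bigD1 a) //=; congr (_ + _).
by rewrite [RHS](bigD1 a) //= eqxx Rplus_0_l; apply: eq_bigr => t /negbTE ->.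
Qed.

Lemma rsum_pick (T : finType) (f : T -> R) (a : T) :
  rsum (fun t => if t == a then f t else 0) = f a.
Proof.
rewrite (@rsumD1 _ _ a) eqxx (@rsum_eq _ _ (fun _ => 0)) ?rsum_0; first lra.
by move=> t; case: (t == a).
Qed.

Lemma rsum_term_le (T : finType) (f : T -> R) (a : T) :
  (forall t, 0 <= f t) -> f a <= rsum f.
Proof.
move=> H; rewrite (@rsumD1 _ _ a).
have : 0 <= rsum (fun t => if t == a then 0 else f t).
  by apply: rsum_ge0 => t; case: (t == a); [lra |].
lra.
Qed.
Arguments rsum_term_le {T} f a.

Lemma rsum_ge0_eq0 (T : finType) (f : T -> R) :
  (forall t, 0 <= f t) -> rsum f = 0 -> forall t, f t = 0.
Proof.
move=> H H0 a; apply: Rle_antisym; last exact: H.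
by rewrite -H0; apply: rsum_term_le.
Qed.

Lemma rmax_ge (T : finType) (a0 : T) (f : T -> R) a : f a <= rmax a0 f.
Proof.
rewrite /rmax; elim: (index_enum T) (mem_index_enum a) => [|b s IH] //.
rewrite inE big_cons => /orP [/eqP -> | /IH h]; first exact: Rmax_l.
exact: Rle_trans h (Rmax_r _ _).
Qed.
Arguments rmax_ge {T} a0 f a.

Lemma rmax_le (T : finType) (a0 : T) (f : T -> R) c :
  (forall a, f a <= c) -> rmax a0 f <= c.
Proof.
move=> H; rewrite /rmax; apply: (big_ind (fun v => v <= c)) => // x y; exact: Rmax_lub.
Qed.

Lemma rmax_eq (T : finType) (a0 : T) (f g : T -> R) :
  (forall a, f a = g a) -> rmax a0 f = rmax a0 g.
Proof. by move=> H; rewrite /rmax H; apply: eq_bigr => a _. Qed.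

Lemma rmax_att (T : finType) (a0 : T) (f : T -> R) : exists a, rmax a0 f = f a.
Proof.
rewrite /rmax; apply: (big_ind (fun v => exists a, v = f a)); first by exists a0.
  move=> x y [a ->] [b ->]; rewrite /Rmax; case: Rle_dec => _; [by exists b | by exists a].
by move=> i _; exists i.
Qed.

Lemma cv_const c : Un_cv (fun _ : nat => c) c.
Proof. move=> e he; exists 0%nat => n _; rewrite /R_dist Rminus_diag Rabs_R0; lra. Qed.

Lemma cv_const_eq (u : nat -> R) l c : Un_cv u l -> (forall n, u n = c) -> l = c.
Proof.
move=> hu hc; apply: (UL_sequence u) => //.
by apply: (Un_cv_ext (fun _ => c)) => [n|]; [rewrite hc | exact: cv_const].
Qed.

Lemma cv_ge0 (u : nat -> R) a : (forall n, 0 <= u n) -> Un_cv u a -> 0 <= a.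
Proof.
move=> h hu; apply: Rnot_lt_le => ha.
have [N HN] := hu (- a) ltac:(lra).
have := HN N (le_n N); have := h N; rewrite /R_dist; split_Rabs; lra.
Qed.

Lemma cv_rsum (T : finType) (f : nat -> T -> R) (g : T -> R) :
  (forall t, Un_cv (fun n => f n t) (g t)) -> Un_cv (fun n => rsum (f n)) (rsum g).
Proof.
rewrite /rsum => H; elim: (index_enum T) => [|a s IH].
  by apply: (Un_cv_ext (fun _ => 0)) => [n|]; rewrite ?big_nil //; exact: cv_const.
rewrite big_cons; apply: (Un_cv_ext (fun n => f n a + \big[Rplus/R0]_(t <- s) f n t)).
  by move=> n; rewrite big_cons.
exact: CV_plus.
Qed.

Lemma inv_small e : 0 < e -> exists K : nat, forall n, (K <= n)%coq_nat -> / (INR n + 1) < e.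
Proof.
move=> he; have [K [HK hK]] := archimed_cor1 e he; exists K => n hn.
have h1 : 0 < INR K by apply: lt_0_INR.
have h2 : INR K <= INR n by apply: le_INR.
apply: Rle_lt_trans HK; apply: Rinv_le_contravar => //; lra.
Qed.

Lemma inv_succ_pos (k : nat) : 0 < / (INR k + 1).
Proof. by apply: Rinv_0_lt_compat; have := pos_INR k; lra. Qed.

Definition extraction (phi : nat -> nat) := forall n, (phi n < phi (S n))%coq_nat.

Lemma extraction_ge (phi : nat -> nat) : extraction phi -> forall n, (n <= phi n)%coq_nat.
Proof. move=> H; elim=> [|n IH]; [lia | have := H n; lia]. Qed.

Lemma extraction_comp (phi psi : nat -> nat) :
  extraction phi -> extraction psi -> extraction (fun n => phi (psi n)).
Proof.
move=> Hp Hq n.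
have mono : forall a b, (a < b)%coq_nat -> (phi a < phi b)%coq_nat.
  move=> a b; elim: b => [|b IH] h; first lia.
  have := Hp b; case: (Nat.eq_dec a b) => [->|ne]; first lia.
  have := IH ltac:(lia); lia.
exact: mono (Hq n).
Qed.

Lemma cv_extraction (u : nat -> R) l phi :
  extraction phi -> Un_cv u l -> Un_cv (fun n => u (phi n)) l.
Proof.
move=> Hp Hu e he; have [N HN] := Hu e he; exists N => n hn.
apply: HN; have := extraction_ge Hp n; lia.
Qed.

(* Bolzano-Weierstrass: a bounded real sequence has a convergent subsequence
   (Stdlib only provides a cluster point, from which we extract). *)
Lemma bw_subseq (u : nat -> R) M : (forall n, Rabs (u n) <= M) ->
  exists phi l, extraction phi /\ Un_cv (fun n => u (phi n)) l.
Proof.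
move=> Hb.
have hX : forall n, -M <= u n <= M by move=> n; have := Hb n; split_Rabs; lra.
have [l Hl] := Bolzano_Weierstrass u _ (compact_P3 (- M) M) hX.
have close : forall N k : nat, exists p, (N <= p)%coq_nat /\ Rabs (u p - l) < / (INR k + 1).
  move=> N k; pose e := mkposreal _ (inv_succ_pos k).
  have [p [hp hv]] := Hl (disc l e) N (ex_intro _ e (fun y h => h)).
  by exists p.
pose g N k := proj1_sig (constructive_indefinite_description _ (close N k)).
have gP : forall N k, (N <= g N k)%coq_nat /\ Rabs (u (g N k) - l) < / (INR k + 1).
  by move=> N k; rewrite /g; case: constructive_indefinite_description.
pose phi := fix phi n := match n with 0 => g 0%nat 0%nat | S m => g (S (phi m)) (S m) end.
exists phi, l; split.
  by move=> n /=; have := (gP (S (phi n)) (S n)).1; lia.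
move=> e he; have [K HK] := inv_small he; exists K => n hn.
rewrite /R_dist; apply: Rlt_trans (HK n hn).
by case: n {hn} => [|n]; exact: (gP _ _).2.
Qed.

(* Bolzano-Weierstrass in R^I for a finite index type I: extract one
   coordinate after the other. *)
Lemma bw_subseq_fin (I : finType) (q : nat -> I -> R) M : (forall n i, Rabs (q n i) <= M) ->
  exists phi L, extraction phi /\ forall i, Un_cv (fun n => q (phi n) i) (L i).
Proof.
move=> Hb.
suff /(_ (index_enum I)) [phi [L [h1 h2]]] : forall s : seq I, exists phi L,
    extraction phi /\ forall i, i \in s -> Un_cv (fun n => q (phi n) i) (L i).
  by exists phi, L; split => // i; exact: h2 (mem_index_enum i).
elim=> [|j s [phi [L [h1 h2]]]].
  by exists (fun n : nat => n), (fun _ => 0); split => // n; lia.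
have [psi [l [h3 h4]]] := bw_subseq (fun n => Hb (phi n) j).
exists (fun n => phi (psi n)), (fun i => if i == j then l else L i); split.
  exact: extraction_comp.
move=> i; rewrite inE; case: eqP => [-> _ // | _ /= hi].
exact: cv_extraction h3 (h2 i hi).
Qed.

Lemma inf_approx (T : Type) (K : T -> Prop) (f : T -> R) c :
  (exists q, K q) -> (forall q, K q -> c <= f q) ->
  exists m (qs : nat -> T), (forall q, K q -> m <= f q) /\
    forall k, K (qs k) /\ f (qs k) < m + / (INR k + 1).
Proof.
move=> [q0 Kq0] Hc.
pose E v := exists q, K q /\ v = - f q.
have Eb : bound E by exists (- c) => v [q [Kq ->]]; have := Hc q Kq; lra.
have [m' [Hub Hlub]] :=
  completeness E Eb (ex_intro _ (- f q0) (ex_intro _ q0 (conj Kq0 erefl))).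
have lb : forall q, K q -> - m' <= f q.
  by move=> q Kq; have := Hub (- f q) (ex_intro _ q (conj Kq erefl)); lra.
have near : forall k : nat, exists q, K q /\ f q < - m' + / (INR k + 1).
  move=> k; apply: NNPP => hn; have hk := inv_succ_pos k.
  suff /Hlub : is_upper_bound E (m' - / (INR k + 1)) by lra.
  move=> v [q [Kq ->]]; apply: Rnot_lt_le => hv; apply: hn; exists q; split => //; lra.
exists (- m'), (fun k => proj1_sig (constructive_indefinite_description _ (near k))).
split=> // k; by case: constructive_indefinite_description.
Qed.

Lemma extreme_value (I : finType) (K : (I -> R) -> Prop) (f : (I -> R) -> R) M c :
  (exists q, K q) -> (forall q, K q -> forall i, Rabs (q i) <= M) ->
  (forall q, K q -> c <= f q) ->
  (forall (qs : nat -> I -> R) L, (forall n, K (qs n)) ->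
     (forall i, Un_cv (fun n => qs n i) (L i)) -> K L /\ Un_cv (fun n => f (qs n)) (f L)) ->
  exists L, K L /\ forall q, K q -> f L <= f q.
Proof.
move=> hne Hb Hc Hlim.
have [m [qs [Hm Hqs]]] := inf_approx hne Hc.
have [phi [L [hphi hL]]] := bw_subseq_fin (fun n i => Hb _ (Hqs n).1 i).
have [KL cvL] := Hlim (fun n => qs (phi n)) L (fun n => (Hqs (phi n)).1) hL.
exists L; split => // q Kq.
suff -> : f L = m by apply: Hm.
apply: (UL_sequence _ _ _ cvL) => e he.
have [N HN] := inv_small he; exists N => n hn; rewrite /R_dist.
have h1 := Hm _ (Hqs (phi n)).1.
have h2 := (Hqs (phi n)).2.
have h3 : / (INR (phi n) + 1) <= / (INR n + 1).
  apply: Rinv_le_contravar; first by have := pos_INR n; lra.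
  have := le_INR _ _ (extraction_ge hphi n); lra.
have := HN n hn; rewrite Rabs_right; lra.
Qed.

Section Marginals.
Variables X Y Z : finType.
Implicit Types Q : X -> Y -> Z -> R.

Definition rsum3 (f : X -> Y -> Z -> R) : R :=
  rsum (fun x => rsum (fun y => rsum (fun z => f x y z))).

Lemma rsum3_eq (f g : X -> Y -> Z -> R) :
  (forall x y z, f x y z = g x y z) -> rsum3 f = rsum3 g.
Proof. by move=> h; do 3 (apply: rsum_eq => ?); exact: h. Qed.

Lemma rsum3_eq0 (f : X -> Y -> Z -> R) : (forall x y z, f x y z = 0) -> rsum3 f = 0.
Proof. by move=> h; rewrite (rsum3_eq h) /rsum3 !rsum_0. Qed.

Lemma rsum3_add (f g : X -> Y -> Z -> R) :
  rsum3 (fun x y z => f x y z + g x y z) = rsum3 f + rsum3 g.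
Proof.
rewrite /rsum3 -rsum_add; apply: rsum_eq => x; rewrite -rsum_add.
by apply: rsum_eq => y; rewrite -rsum_add.
Qed.

Lemma rsum3_sub (f g : X -> Y -> Z -> R) :
  rsum3 (fun x y z => f x y z - g x y z) = rsum3 f - rsum3 g.
Proof.
rewrite /rsum3 -rsum_sub; apply: rsum_eq => x; rewrite -rsum_sub.
by apply: rsum_eq => y; rewrite -rsum_sub.
Qed.

Lemma rsum3_ge0 (f : X -> Y -> Z -> R) : (forall x y z, 0 <= f x y z) -> 0 <= rsum3 f.
Proof. by move=> h; do 3 (apply: rsum_ge0 => ?); exact: h. Qed.

Lemma rsum3_ge0_eq0 (f : X -> Y -> Z -> R) :
  (forall x y z, 0 <= f x y z) -> rsum3 f = 0 -> forall x y z, f x y z = 0.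
Proof.
move=> h H x y z.
have h2 x' y' : 0 <= rsum (fun z => f x' y' z) by apply: rsum_ge0.
have h1 x' : 0 <= rsum (fun y => rsum (fun z => f x' y z)) by apply: rsum_ge0.
move: (rsum_ge0_eq0 h1 H x) => /(rsum_ge0_eq0 (h2 x))/(_ y).
by move/(rsum_ge0_eq0 (h x y)).
Qed.

Section Nonneg.
Variable Q : X -> Y -> Z -> R.
Hypothesis Q_ge0 : forall x y z, 0 <= Q x y z.

Lemma margXY_ge0 x y : 0 <= margXY Q x y.
Proof. exact: rsum_ge0. Qed.

Lemma margYZ_ge0 y z : 0 <= margYZ Q y z.
Proof. exact: rsum_ge0. Qed.

Lemma margY_ge0 y : 0 <= margY Q y.
Proof. by apply: rsum_ge0 => x; exact: margXY_ge0. Qed.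

Lemma le_margXY x y z : Q x y z <= margXY Q x y.
Proof. exact: (rsum_term_le (fun z => Q x y z)). Qed.

Lemma le_margYZ x y z : Q x y z <= margYZ Q y z.
Proof. exact: (rsum_term_le (fun x => Q x y z)). Qed.

Lemma margXY_le_margY x y : margXY Q x y <= margY Q y.
Proof. exact: (rsum_term_le (fun x => margXY Q x y) x (margXY_ge0^~ y)). Qed.

Lemma margXY_eq0 x y : margY Q y = 0 -> margXY Q x y = 0.
Proof. by have := margXY_le_margY x y; have := margXY_ge0 x y; lra. Qed.

End Nonneg.

Lemma margY_sum_margYZ Q y : margY Q y = rsum (fun z => margYZ Q y z).
Proof. exact: rsum_swap. Qed.

Lemma dist_le1 Q : is_dist Q -> forall x y z, Q x y z <= 1.
Proof.
move=> [h0 h1] x y z; rewrite -h1.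
apply: Rle_trans (le_margXY h0 x y z) _.
apply: Rle_trans (rsum_term_le (fun y => margXY Q x y) y (margXY_ge0 h0 x)) _.
apply: (rsum_term_le (fun x => rsum (fun y => margXY Q x y)) x) => t.
by apply: rsum_ge0 => t'; exact: margXY_ge0.
Qed.

Lemma dist_inhabited_Z Q : is_dist Q -> inhabited Z.
Proof.
move=> [_ h1]; case: (pickP (@predT Z)) => [z _ | hZ]; first exact: inhabits z.
suff : rsum3 Q = 0 by rewrite /rsum3; lra.
by apply: rsum3_eq0 => x y z; have := hZ z.
Qed.

End Marginals.

Lemma ln_ratio_lower a w : 0 < a -> 0 < w ->
  a - w <= a * ln (a / w) /\ (a * ln (a / w) = a - w -> a = w).
Proof.
move=> ha hw; have hr : 0 < w / a by apply: Rdiv_lt_0_compat.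
have E : a * ln (a / w) = a * - ln (w / a).
  by rewrite -ln_Rinv // Rinv_div.
have E' : a - w = a * - (w / a - 1) by field; lra.
rewrite E E'; split.
  apply: Rmult_le_compat_l; first lra.
  by have := exp_ineq1_le (ln (w / a)); rewrite exp_ln //; lra.
move=> Heq; apply: NNPP => ne.
have ne' : w / a <> 1.
  move=> h; apply: ne; have e : w = w / a * a by field; lra.
  by rewrite h in e; lra.
have := exp_ineq1 _ (ln_neq_0 _ ne' hr); rewrite exp_ln // => hlt.
suff : a * - (w / a - 1) < a * - ln (w / a) by lra.
apply: Rmult_lt_compat_l; lra.
Qed.

Section Gibbs.
Variables X Y Z : finType.
Implicit Types Q : X -> Y -> Z -> R.

Definition markov Q : Prop :=
  forall x y z, Q x y z * margY Q y = margXY Q x y * margYZ Q y z.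

Definition cmi_term Q x y z : R :=
  if Rlt_dec 0 (Q x y z) then
    Q x y z * ln (Q x y z * margY Q y / (margXY Q x y * margYZ Q y z))
  else 0.

Definition markov_part Q x y z : R :=
  if Rlt_dec 0 (margY Q y) then margXY Q x y * margYZ Q y z / margY Q y else 0.

Lemma markov_part_ge0 Q : (forall x y z, 0 <= Q x y z) ->
  forall x y z, 0 <= markov_part Q x y z.
Proof.
move=> h0 x y z; rewrite /markov_part; case: Rlt_dec => hy /=; last lra.
apply: Rmult_le_pos; last by left; apply: Rinv_0_lt_compat.
by apply: Rmult_le_pos; [exact: margXY_ge0 | exact: margYZ_ge0].
Qed.

Lemma markov_part_sum Q : is_dist Q -> rsum3 (markov_part Q) = 1.
Proof.
move=> [h0 h1]; have -> : 1 = rsum (fun y => margY Q y) by rewrite -h1 rsum_swap.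
rewrite /rsum3 rsum_swap.
apply: rsum_eq => y; rewrite /markov_part; case: Rlt_dec => hy /=.
  rewrite (@rsum_eq _ _ (fun x => margXY Q x y * (rsum (fun z => margYZ Q y z) / margY Q y))).
    by rewrite rsum_scar -margY_sum_margYZ -/(margY Q y); field; lra.
  by move=> x; rewrite /Rdiv -rsum_scar -rsum_scal; apply: rsum_eq => z; ring.
have hY : margY Q y = 0 by have := margY_ge0 h0 y; lra.
by rewrite !rsum_0 hY.
Qed.

Lemma cmi_term_lower Q x y z : (forall x y z, 0 <= Q x y z) ->
  Q x y z - markov_part Q x y z <= cmi_term Q x y z /\
  (cmi_term Q x y z = Q x y z - markov_part Q x y z ->
   Q x y z * margY Q y = margXY Q x y * margYZ Q y z).
Proof.
move=> h0; have hm := markov_part_ge0 h0 x y z.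
rewrite /cmi_term; case: Rlt_dec => hq /=.
  have hXY := le_margXY h0 x y z; have hYZ := le_margYZ h0 x y z.
  have hY := margXY_le_margY h0 x y.
  have Em : markov_part Q x y z = margXY Q x y * margYZ Q y z / margY Q y.
    by rewrite /markov_part; case: Rlt_dec => //= hy; lra.
  have hw : 0 < markov_part Q x y z.
    by rewrite Em; apply: Rdiv_lt_0_compat; [apply: Rmult_lt_0_compat|]; lra.
  have Er : Q x y z * margY Q y / (margXY Q x y * margYZ Q y z) =
            Q x y z / markov_part Q x y z by rewrite Em; field; lra.
  have [lo hi] := ln_ratio_lower hq hw; rewrite Er; split => // /hi.
  by rewrite Em => ->; field; lra.
have -> : Q x y z = 0 by have := h0 x y z; lra.
split; first lra.
rewrite Rmult_0_l /markov_part; case: Rlt_dec => hy /= h.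
  have e : margXY Q x y * margYZ Q y z / margY Q y = 0 by lra.
  have : margXY Q x y * margYZ Q y z = margXY Q x y * margYZ Q y z / margY Q y * margY Q y.
    by field; lra.
  by rewrite e Rmult_0_l => ->.
by rewrite (margXY_eq0 h0) ?Rmult_0_l //; have := margY_ge0 h0 y; lra.
Qed.

(* Gibbs inequality: condMI Q = sum (cmi_term - (Q - markov_part)) is a
   sum of nonnegative terms; it vanishes only for Markov chains. *)
Lemma condMI_gap Q : is_dist Q ->
  condMI Q = rsum3 (fun x y z => cmi_term Q x y z - (Q x y z - markov_part Q x y z)).
Proof.
move=> hQ; have h1 : rsum3 Q = 1 := hQ.2.
have -> : condMI Q = rsum3 (cmi_term Q) by [].
by rewrite !rsum3_sub h1 markov_part_sum //; ring.
Qed.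

Lemma condMI_ge0 Q : is_dist Q -> 0 <= condMI Q.
Proof.
move=> hQ; rewrite condMI_gap //; apply: rsum3_ge0 => x y z.
by have := (cmi_term_lower x y z hQ.1).1; lra.
Qed.

Lemma condMI_eq0_markov Q : is_dist Q -> condMI Q = 0 -> markov Q.
Proof.
move=> hQ; rewrite condMI_gap // => H0 x y z.
have gap_ge0 a b c : 0 <= cmi_term Q a b c - (Q a b c - markov_part Q a b c).
  by have := (cmi_term_lower a b c hQ.1).1; lra.
apply: (cmi_term_lower x y z hQ.1).2.
by have := rsum3_ge0_eq0 gap_ge0 H0 x y z; lra.
Qed.

Lemma markov_condMI0 Q : (forall x y z, 0 <= Q x y z) -> markov Q -> condMI Q = 0.
Proof.
move=> h0 hM; apply: rsum3_eq0 => x y z; rewrite /cmi_term.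
case: Rlt_dec => // hq /=.
have hY : 0 < margY Q y.
  by have := le_margXY h0 x y z; have := margXY_le_margY h0 x y; lra.
by rewrite -hM /Rdiv Rinv_r ?ln_1 ?Rmult_0_r //; apply: Rgt_not_eq; apply: Rmult_lt_0_compat.
Qed.

End Gibbs.

Definition xlnx (t : R) : R := t * ln t.

(* Near 0, t ln t is dominated by 2 sqrt t (from ln s <= s - 1 at s = 1 / sqrt t). *)
Lemma xlnx_small t : 0 < t -> t < 1 -> Rabs (xlnx t) <= 2 * sqrt t.
Proof.
move=> h0 h1; set s := sqrt t.
have hs : 0 < s by apply: sqrt_lt_R0.
have hss : s * s = t by apply: sqrt_sqrt; lra.
have hs1 : s < 1 by rewrite /s -sqrt_1; apply: sqrt_lt_1; lra.
have Et : ln t = - 2 * ln (/ s) by rewrite ln_Rinv // -hss ln_mult //; ring.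
have hl : ln (/ s) <= / s - 1.
  by have := exp_ineq1_le (ln (/ s)); rewrite exp_ln //; [lra | apply: Rinv_0_lt_compat].
have hl0 : 0 < ln (/ s).
  rewrite ln_Rinv //; have : ln s < ln 1 by apply: ln_increasing.
  by rewrite ln_1; lra.
have hpos : 0 < t * (2 * ln (/ s)) by apply: Rmult_lt_0_compat; lra.
rewrite /xlnx Et Rabs_left; last lra.
have : t * (2 * ln (/ s)) <= t * (2 * / s) by apply: Rmult_le_compat_l; lra.
have -> : t * (2 * / s) = 2 * s by rewrite -hss; field; lra.
lra.
Qed.

Lemma cv_xlnx (u : nat -> R) a : (forall n, 0 <= u n) -> Un_cv u a ->
  Un_cv (fun n => xlnx (u n)) (xlnx a).
Proof.
move=> h hu; have ha := cv_ge0 h hu; rewrite /xlnx.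
case: (Rle_lt_or_eq_dec _ _ ha) => [ha' | a0].
  apply: CV_mult => //; apply: continuity_seq => //.
  by apply: derivable_continuous_pt; exists (/ a); exact: derivable_pt_lim_ln.
subst a; rewrite Rmult_0_l => e he.
have he2 : 0 < Rmin 1 ((e / 2) * (e / 2)).
  by apply: Rmin_pos; [lra | apply: Rmult_lt_0_compat; lra].
have [N HN] := hu _ he2; exists N => n hn.
have := HN n hn; rewrite /R_dist Rminus_0_r Rabs_right; last exact: Rle_ge (h n).
move=> hlt; rewrite Rminus_0_r.
case: (Rle_lt_or_eq_dec _ _ (h n)) => [p | <-]; last by rewrite Rmult_0_l Rabs_R0.
have h1 : u n < 1 by have := Rmin_l 1 (e / 2 * (e / 2)); lra.
apply: Rle_lt_trans (xlnx_small p h1) _.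
suff : sqrt (u n) < e / 2 by lra.
rewrite -(sqrt_square (e / 2)); last lra.
apply: sqrt_lt_1; [lra | apply: Rmult_le_pos; lra |].
by have := Rmin_r 1 (e / 2 * (e / 2)); lra.
Qed.

Section Minimizer.
Variables X Y Z : finType.
Implicit Types P Q : X -> Y -> Z -> R.

(* condMI as a signed combination of the "negative entropies" sum t ln t
   of Q and of its marginals: each of these is continuous in Q. *)
Lemma condMI_entropies Q : (forall x y z, 0 <= Q x y z) ->
  condMI Q = rsum3 (fun x y z => xlnx (Q x y z)) + rsum (fun y => xlnx (margY Q y))
    - rsum (fun x => rsum (fun y => xlnx (margXY Q x y)))
    - rsum (fun y => rsum (fun z => xlnx (margYZ Q y z))).
Proof.
move=> h0.
have TY : rsum (fun y => xlnx (margY Q y)) = rsum3 (fun x y z => Q x y z * ln (margY Q y)).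
  rewrite /rsum3 (@rsum_eq _ _ (fun x => rsum (fun y => margXY Q x y * ln (margY Q y)))).
    by rewrite rsum_swap; apply: rsum_eq => y; rewrite rsum_scar.
  by move=> x; apply: rsum_eq => y; rewrite rsum_scar.
have TXY : rsum (fun x => rsum (fun y => xlnx (margXY Q x y))) =
           rsum3 (fun x y z => Q x y z * ln (margXY Q x y)).
  by apply: rsum_eq => x; apply: rsum_eq => y; rewrite rsum_scar.
have TYZ : rsum (fun y => rsum (fun z => xlnx (margYZ Q y z))) =
           rsum3 (fun x y z => Q x y z * ln (margYZ Q y z)).
  rewrite /rsum3 [RHS]rsum_swap; apply: rsum_eq => y; rewrite [RHS]rsum_swap.
  apply: rsum_eq => z.
  by rewrite rsum_scar.
rewrite TY TXY TYZ -!rsum3_add -!rsum3_sub; apply: rsum3_eq => x y z.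
rewrite /cmi_term /xlnx; case: Rlt_dec => hq /=; last first.
  have -> : Q x y z = 0 by have := h0 x y z; lra.
  ring.
have hXY := le_margXY h0 x y z; have hYZ := le_margYZ h0 x y z.
have hY := margXY_le_margY h0 x y.
rewrite /Rdiv ln_mult; last by apply: Rinv_0_lt_compat; apply: Rmult_lt_0_compat; lra.
  by rewrite ln_Rinv ?ln_mult; [ring | lra | lra | lra | lra | apply: Rmult_lt_0_compat; lra].
by apply: Rmult_lt_0_compat; lra.
Qed.

Lemma cv_condMI (qs : nat -> X -> Y -> Z -> R) L :
  (forall n x y z, 0 <= qs n x y z) ->
  (forall x y z, Un_cv (fun n => qs n x y z) (L x y z)) ->
  Un_cv (fun n => condMI (qs n)) (condMI L).
Proof.
move=> h0 hc.
have hL x y z : 0 <= L x y z by exact: cv_ge0 (fun n => h0 n x y z) (hc x y z).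
rewrite condMI_entropies //.
apply: (Un_cv_ext (fun n => rsum3 (fun x y z => xlnx (qs n x y z)) +
    rsum (fun y => xlnx (margY (qs n) y)) - rsum (fun x => rsum (fun y => xlnx (margXY (qs n) x y)))
    - rsum (fun y => rsum (fun z => xlnx (margYZ (qs n) y z))))).
  by move=> n; rewrite condMI_entropies.
have cXY x y : Un_cv (fun n => margXY (qs n) x y) (margXY L x y).
  by apply: cv_rsum => z; apply: hc.
have cYZ y z : Un_cv (fun n => margYZ (qs n) y z) (margYZ L y z).
  by apply: cv_rsum => x; apply: hc.
have cY y : Un_cv (fun n => margY (qs n) y) (margY L y) by apply: cv_rsum => x; apply: cXY.
apply: CV_minus; first apply: CV_minus; first apply: CV_plus.
- apply: cv_rsum => x; apply: cv_rsum => y; apply: cv_rsum => z.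
  by apply: cv_xlnx; [move=> n; exact: h0 | exact: hc].
- by apply: cv_rsum => y; apply: cv_xlnx (cY y) => n; exact: margY_ge0.
- by apply: cv_rsum => x; apply: cv_rsum => y; apply: cv_xlnx (cXY x y) => n; exact: margXY_ge0.
- by apply: cv_rsum => y; apply: cv_rsum => z; apply: cv_xlnx (cYZ y z) => n; exact: margYZ_ge0.
Qed.

Lemma DeltaP_closed P (qs : nat -> X -> Y -> Z -> R) L :
  (forall n, DeltaP P (qs n)) -> (forall x y z, Un_cv (fun n => qs n x y z) (L x y z)) ->
  DeltaP P L.
Proof.
move=> hK hc; split; [split | split].
- by move=> x y z; exact: cv_ge0 (fun n => (hK n).1.1 x y z) (hc x y z).
- apply: (cv_const_eq (u := fun n => rsum3 (qs n))); last by move=> n; exact: (hK n).1.2.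
  by do 3 (apply: cv_rsum => ?); apply: hc.
- move=> x y; apply: (cv_const_eq (u := fun n => margXY (qs n) x y)).
    by apply: cv_rsum => z; apply: hc.
  by move=> n; exact: (hK n).2.1.
- move=> x z; apply: (cv_const_eq (u := fun n => margXZ (qs n) x z)).
    by apply: cv_rsum => y; apply: hc.
  by move=> n; exact: (hK n).2.2.
Qed.

(* The minimum defining UI~ is attained: Delta_P is a nonempty compact set
   (P itself belongs to it) on which condMI is continuous. *)
Lemma condMI_min_exists P : is_dist P ->
  exists Qm, DeltaP P Qm /\ forall Q, DeltaP P Q -> condMI Qm <= condMI Q.
Proof.
move=> hP; pose curry3 (g : X * Y * Z -> R) x y z := g (x, y, z).
pose K g := DeltaP P (curry3 g).
have K_ne : exists g, K g by exists (fun t => P t.1.1 t.1.2 t.2).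
have K_bounded g : K g -> forall t, Rabs (g t) <= 1.
  move=> [hd _] [[x y] z]; have := dist_le1 hd x y z; have := hd.1 x y z.
  by rewrite /curry3 /= => a b; rewrite Rabs_right; lra.
have K_ge0 g : K g -> 0 <= condMI (curry3 g) by move=> [hd _]; exact: condMI_ge0.
have K_limit qs L : (forall n, K (qs n)) -> (forall t, Un_cv (fun n => qs n t) (L t)) ->
    K L /\ Un_cv (fun n => condMI (curry3 (qs n))) (condMI (curry3 L)).
  move=> hK hc; split; first exact: DeltaP_closed hK (fun x y z => hc (x, y, z)).
  by apply: cv_condMI (fun x y z => hc (x, y, z)) => n x y z; exact: (hK n).1.1.
have [L [KL HL]] := extreme_value K_ne K_bounded K_ge0 K_limit.
exists (curry3 L); split => // Q hQ.
exact: (HL (fun t => Q t.1.1 t.1.2 t.2) hQ).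
Qed.

Lemma UItilde_spec P : is_dist P -> is_UI_min P (UItilde P).
Proof.
move=> hP; apply: epsilon_spec.
have [Qm [hm H]] := condMI_min_exists hP.
by exists (condMI Qm); split; [exists Qm | exact: H].
Qed.

End Minimizer.

Definition stochastic (T W : finType) (lam : T -> W -> R) : Prop :=
  (forall t w, 0 <= lam t w) /\ (forall t, rsum (lam t) = 1).

Definition det_channel (T W : finType) (g : T -> W) (t : T) (w : W) : R :=
  if w == g t then 1 else 0.

Lemma det_channel_stochastic (T W : finType) (g : T -> W) : stochastic (det_channel g).
Proof.
split=> [t w | t]; rewrite /det_channel; first by case: (w == g t); lra.
exact: (rsum_pick (fun _ => 1)).
Qed.

Section Garbling.
Variables X Y Z : finType.
Implicit Types P Q : X -> Y -> Z -> R.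

Definition garble (W : finType) P (lam : Y -> W -> R) (x : X) (w : W) : R :=
  rsum (fun y => margXY P x y * lam y w).

Definition garbling P (lam : Y -> Z -> R) : Prop :=
  stochastic lam /\ forall x z, margXZ P x z = garble P lam x z.

(* A Markov chain X - Y - Z in Delta_P exhibits Z as a garbling of Y under P,
   through the conditional law Q(z | y) (a point mass where Q(y) = 0). *)
Lemma markov_garbling P Q (z0 : Z) : DeltaP P Q -> markov Q -> exists lam, garbling P lam.
Proof.
move=> [[h0 _] [hXY hXZ]] hM.
pose lam y z := if Rlt_dec 0 (margY Q y) then margYZ Q y z / margY Q y
                else det_channel (fun _ : Y => z0) y z.
have [pt0 pt1] := det_channel_stochastic (fun _ : Y => z0).
exists lam; split; first split.
- move=> y z; rewrite /lam; case: Rlt_dec => h /=; last exact: pt0.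
  by apply: Rmult_le_pos; [exact: margYZ_ge0 | left; exact: Rinv_0_lt_compat].
- move=> y; rewrite /lam; case: Rlt_dec => h /=; last exact: pt1.
  rewrite /Rdiv rsum_scar -margY_sum_margYZ; field; lra.
- move=> x z; rewrite -hXZ; apply: rsum_eq => y; rewrite -hXY /lam.
  case: Rlt_dec => h /=.
    apply: (Rmult_eq_reg_r (margY Q y)); last lra.
    by rewrite hM; field; lra.
  have hY : margY Q y = 0 by have := margY_ge0 h0 y; lra.
  have hxy := margXY_eq0 h0 x hY.
  by have := le_margXY h0 x y z; have := h0 x y z; rewrite hxy Rmult_0_l; lra.
Qed.

Lemma garbling_markov P lam : is_dist P -> garbling P lam ->
  DeltaP P (fun x y z => margXY P x y * lam y z) /\
  markov (fun x y z => margXY P x y * lam y z).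
Proof.
move=> hP [[l0 l1] lc]; set Q := fun x y z => _.
have mXY x y : margXY Q x y = margXY P x y.
  by rewrite /margXY /Q rsum_scal -/(margXY P x y) l1 Rmult_1_r.
split; first split; first split.
- by move=> x y z; apply: Rmult_le_pos => //; exact: margXY_ge0 hP.1 x y.
- by rewrite -hP.2; do 2 (apply: rsum_eq => ?); exact: mXY.
- by split=> [|x z]; [exact: mXY | rewrite lc].
- move=> x y z; rewrite /margY /margYZ (rsum_eq (fun x => mXY x y)) mXY /Q rsum_scar.
  ring.
Qed.

Lemma UI0_iff_garbling P (z0 : Z) : is_dist P ->
  (UItilde P = 0 <-> exists lam, garbling P lam).
Proof.
move=> hP; have [[Q0 [hQ0 EQ0]] Hmin] := UItilde_spec hP; split.
  move=> h0; rewrite h0 in EQ0.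
  exact: markov_garbling z0 hQ0 (condMI_eq0_markov hQ0.1 EQ0).
move=> [lam hlam]; have [hQ hM] := garbling_markov hP hlam.
have := Hmin _ hQ; rewrite (markov_condMI0 hQ.1.1 hM).
by have := condMI_ge0 hQ0.1; rewrite EQ0; lra.
Qed.

End Garbling.

Definition rsum2 (T U : finType) (f : T -> U -> R) : R := rsum (fun t => rsum (f t)).

Section DoubleSums.
Variables T U : finType.
Implicit Types f g h : T -> U -> R.

Lemma rsum2_eq f g : (forall t u, f t u = g t u) -> rsum2 f = rsum2 g.
Proof. by move=> e; apply: rsum_eq => t; apply: rsum_eq => u; exact: e. Qed.

Lemma rsum2_sub f g : rsum2 (fun t u => f t u - g t u) = rsum2 f - rsum2 g.
Proof. by rewrite /rsum2 -rsum_sub; apply: rsum_eq => t; rewrite rsum_sub. Qed.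

Lemma rsum2_lin f g h a b c :
  rsum2 (fun t u => a * f t u + b * g t u + c * h t u) = a * rsum2 f + b * rsum2 g + c * rsum2 h.
Proof.
rewrite /rsum2 -!rsum_scal -!rsum_add; apply: rsum_eq => t.
by rewrite -!rsum_scal -!rsum_add.
Qed.

Lemma rsum2_sq_ge0 f : 0 <= rsum2 (fun t u => f t u * f t u).
Proof. by apply: rsum_ge0 => t; apply: rsum_ge0 => u; exact: Rle_0_sqr. Qed.

Lemma rsum2_sq_eq0 f : rsum2 (fun t u => f t u * f t u) = 0 -> forall t u, f t u = 0.
Proof.
move=> H t u.
have h2 t' : 0 <= rsum (fun u => f t' u * f t' u) by apply: rsum_ge0 => ?; exact: Rle_0_sqr.
move: (rsum_ge0_eq0 h2 H t) => /(rsum_ge0_eq0 (fun u => Rle_0_sqr (f t u)))/(_ u).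
by rewrite /Rsqr; nra.
Qed.

(* A nearest point v to t in a convex set K sees every w in K at an obtuse
   angle: <t - v, w - v> <= 0.  Otherwise moving from v slightly towards w
   would get closer to t. *)
Lemma nearest_point_obtuse (K : (T -> U -> R) -> Prop) (t v : T -> U -> R) :
  (forall w s, K w -> 0 <= s <= 1 -> K (fun i j => v i j + s * (w i j - v i j))) ->
  (forall w, K w -> rsum2 (fun i j => (t i j - v i j) * (t i j - v i j)) <=
                    rsum2 (fun i j => (t i j - w i j) * (t i j - w i j))) ->
  forall w, K w -> rsum2 (fun i j => (t i j - v i j) * (w i j - v i j)) <= 0.
Proof.
move=> Kconv Hmin w Kw; apply: Rnot_lt_le => hdel.
set del := rsum2 _ in hdel.
set N := rsum2 (fun i j => (w i j - v i j) * (w i j - v i j)).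
have hN : 0 <= N by exact: rsum2_sq_ge0.
pose s := Rmin 1 (del / (N + 1)).
have hs0 : 0 < s by apply: Rmin_pos; [lra | apply: Rdiv_lt_0_compat; lra].
have hsN : s * N < del.
  have hq : 0 < del / (N + 1) by apply: Rdiv_lt_0_compat; lra.
  have : del / (N + 1) * N = del - del / (N + 1) by field; lra.
  have : s * N <= del / (N + 1) * N by apply: Rmult_le_compat_r => //; exact: Rmin_r.
  lra.
have := Hmin _ (Kconv w s Kw (conj (Rlt_le _ _ hs0) (Rmin_l _ _))).
set D2 := rsum2 (fun i j => (t i j - v i j) * (t i j - v i j)).
have -> : rsum2 (fun i j => (t i j - (v i j + s * (w i j - v i j))) *
                             (t i j - (v i j + s * (w i j - v i j)))) =
          1 * D2 + (-2 * s) * del + (s * s) * N.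
  by rewrite -rsum2_lin; apply: rsum2_eq => i j; ring.
nra.
Qed.

End DoubleSums.

Lemma reward_joint (X W A : finType) (a0 : A) (J : X -> W -> R) (p : X -> R) (u : X -> A -> R) :
  (forall x, 0 < p x) ->
  reward a0 (fun x w => J x w / p x) p u =
  rsum (fun w => rmax a0 (fun a => rsum (fun x => J x w * u x a))).
Proof.
move=> hp; apply: rsum_eq => w; apply: rmax_eq => a; apply: rsum_eq => x.
by field; have := hp x; lra.
Qed.

Lemma stochastic_convex (T W : finType) (l1 l2 : T -> W -> R) s :
  stochastic l1 -> stochastic l2 -> 0 <= s <= 1 ->
  stochastic (fun t w => l1 t w + s * (l2 t w - l1 t w)).
Proof.
move=> [h10 h11] [h20 h21] hs; split=> [t w | t].
  by have := h10 t w; have := h20 t w; nra.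
rewrite rsum_add rsum_scal rsum_sub h11 h21; ring.
Qed.

Lemma stochastic_closed (T W : finType) (ls : nat -> T -> W -> R) L :
  (forall n, stochastic (ls n)) -> (forall t w, Un_cv (fun n => ls n t w) (L t w)) ->
  stochastic L.
Proof.
move=> hK hc; split=> [t w | t]; first exact: cv_ge0 (fun n => (hK n).1 t w) (hc t w).
apply: (cv_const_eq (u := fun n => rsum (ls n t))); last by move=> n; exact: (hK n).2 t.
by apply: cv_rsum => w; apply: hc.
Qed.

Section Rewards.
Variables X Y Z : finType.
Variable P : X -> Y -> Z -> R.
Hypothesis margX_gt0 : forall x, 0 < margX P x.

Lemma garble_convex (W : finType) (l1 l2 : Y -> W -> R) s x w :
  garble P (fun y w => l1 y w + s * (l2 y w - l1 y w)) x w =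
  garble P l1 x w + s * (garble P l2 x w - garble P l1 x w).
Proof. by rewrite /garble -rsum_sub -rsum_scal -rsum_add; apply: rsum_eq => y; ring. Qed.

(* Blackwell's easy direction: an agent observing Y can simulate the
   garbling lam and then act as the agent observing Z would. *)
Lemma garbling_dominates lam : garbling P lam ->
  forall (A : finType) (a0 : A) (u : X -> A -> R),
    reward a0 (mu P) (margX P) u <= reward a0 (kappa P) (margX P) u.
Proof.
move=> [[l0 l1] lc] A a0 u; rewrite !reward_joint //.
pose F y a := rsum (fun x => margXY P x y * u x a).
have E z a : rsum (fun x => margXZ P x z * u x a) = rsum (fun y => lam y z * F y a).
  rewrite (@rsum_eq _ _ (fun x => rsum (fun y => margXY P x y * lam y z * u x a))).
    by rewrite rsum_swap; apply: rsum_eq => y; rewrite /F -rsum_scal; apply: rsum_eq => x; ring.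
  by move=> x; rewrite lc /garble -rsum_scar.
apply: Rle_trans (_ : rsum (fun z => rsum (fun y => lam y z * rmax a0 (F y))) <= _).
  apply: rsum_le => z; apply: rmax_le => a; rewrite E; apply: rsum_le => y.
  by apply: Rmult_le_compat_l => //; exact: rmax_ge.
rewrite rsum_swap; right; apply: rsum_eq => y.
by rewrite rsum_scar l1 Rmult_1_l.
Qed.

(* The optimal strategy of the agent observing Y is a deterministic channel
   from Y to the actions. *)
Lemma reward_kappa_channel (W : finType) (w0 : W) (u : X -> W -> R) :
  exists lam, stochastic lam /\
    rsum2 (fun x w => u x w * garble P lam x w) = reward w0 (kappa P) (margX P) u.
Proof.
pose F y a := rsum (fun x => margXY P x y * u x a).
have best y : exists a, rmax w0 (F y) = F y a by exact: rmax_att.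
pose g y := proj1_sig (constructive_indefinite_description _ (best y)).
have gP y : rmax w0 (F y) = F y (g y).
  by rewrite /g; case: constructive_indefinite_description.
exists (det_channel g); split; first exact: det_channel_stochastic.
rewrite reward_joint // (rsum_eq gP) rsum_swap; apply: rsum_eq => x.
rewrite /garble (@rsum_eq _ _ (fun w => rsum (fun y =>
    margXY P x y * (if w == g y then u x w else 0)))).
  by rewrite rsum_swap; apply: rsum_eq => y; rewrite rsum_scal rsum_pick.
move=> w; rewrite -rsum_scal; apply: rsum_eq => y; rewrite /det_channel.
by case: (w == g y); ring.
Qed.

(* The agent observing Z can at least play the action equal to its observation. *)
Lemma reward_mu_truthful (z0 : Z) (u : X -> Z -> R) :
  rsum2 (fun x z => u x z * margXZ P x z) <= reward z0 (mu P) (margX P) u.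
Proof.
rewrite reward_joint // /rsum2 rsum_swap; apply: rsum_le => z.
by apply: Rle_trans (rmax_ge z0 _ z); right; apply: rsum_eq => x; ring.
Qed.

Definition garble_dist (lam : Y -> Z -> R) : R :=
  rsum2 (fun x z => (margXZ P x z - garble P lam x z) * (margXZ P x z - garble P lam x z)).

(* Some channel minimises the distance: the channels form a compact set. *)
Lemma nearest_garbling_exists (z0 : Z) :
  exists ls, stochastic ls /\ forall lam, stochastic lam -> garble_dist ls <= garble_dist lam.
Proof.
pose curry2 (g : Y * Z -> R) y z := g (y, z).
pose K g := stochastic (curry2 g).
have K_ne : exists g, K g.
  by exists (fun t => det_channel (fun _ : Y => z0) t.1 t.2); exact: det_channel_stochastic.
have K_bounded g : K g -> forall t, Rabs (g t) <= 1.
  move=> [h0 h1] [y z]; rewrite Rabs_right; last exact: Rle_ge (h0 y z).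
  by rewrite -(h1 y); exact: (rsum_term_le (curry2 g y) z (h0 y)).
have K_ge0 g : K g -> 0 <= garble_dist (curry2 g) by move=> _; exact: rsum2_sq_ge0.
have K_limit qs L : (forall n, K (qs n)) -> (forall t, Un_cv (fun n => qs n t) (L t)) ->
    K L /\ Un_cv (fun n => garble_dist (curry2 (qs n))) (garble_dist (curry2 L)).
  move=> hK hc; split; first exact: stochastic_closed hK (fun y z => hc (y, z)).
  have cg x z : Un_cv (fun n => garble P (curry2 (qs n)) x z) (garble P (curry2 L) x z).
    by apply: cv_rsum => y; apply: CV_mult; [exact: cv_const | exact: hc].
  apply: cv_rsum => x; apply: cv_rsum => z.
  by apply: CV_mult; apply: CV_minus => //; exact: cv_const.
have [L [KL HL]] := extreme_value K_ne K_bounded K_ge0 K_limit.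
exists (curry2 L); split => // lam hl.
exact: (HL (fun t => lam t.1 t.2) hl).
Qed.

(* Let ls be the nearest garbled law and D the residual
   P(x,z) - garble ls.  In the decision problem with actions Z and utility D,
   the Z-agent earns at least <D, P_XZ> = <D, garble ls> + |D|^2, while the
   Y-agent earns <D, garble lg> <= <D, garble ls> for some channel lg, by the
   obtuse-angle property of ls.  Dominance then forces |D|^2 <= 0. *)
Lemma blackwell (z0 : Z) :
  (forall (A : finType) (a0 : A) (u : X -> A -> R),
     reward a0 (mu P) (margX P) u <= reward a0 (kappa P) (margX P) u) ->
  exists lam, garbling P lam.
Proof.
move=> dominance; have [ls [sls ls_min]] := nearest_garbling_exists z0.
pose D x z := margXZ P x z - garble P ls x z.
have obtuse lam : stochastic lam ->
    rsum2 (fun x z => D x z * (garble P lam x z - garble P ls x z)) <= 0.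
  move=> hl; apply: (nearest_point_obtuse (K := fun f => exists l, stochastic l /\
                       forall x z, f x z = garble P l x z)).
  - move=> w s [l [hl' hw]] hs; exists (fun y z => ls y z + s * (l y z - ls y z)).
    by split=> [|x z]; [exact: stochastic_convex | rewrite hw garble_convex].
  - move=> w [l [hl' hw]]; apply: Rle_trans (ls_min l hl') _; right.
    by apply: rsum2_eq => x z; rewrite hw.
  - by exists lam.
have ip_sub (f g : X -> Z -> R) : rsum2 (fun x z => D x z * (f x z - g x z)) =
    rsum2 (fun x z => D x z * f x z) - rsum2 (fun x z => D x z * g x z).
  by rewrite -rsum2_sub; apply: rsum2_eq => x z; ring.
have [lg [slg Elg]] := reward_kappa_channel z0 D.
have Hobt := obtuse _ slg; rewrite ip_sub Elg in Hobt.
have HD : rsum2 (fun x z => D x z * D x z) =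
    rsum2 (fun x z => D x z * margXZ P x z) - rsum2 (fun x z => D x z * garble P ls x z).
  exact: ip_sub.
have HD0 : rsum2 (fun x z => D x z * D x z) <= 0.
  by have := reward_mu_truthful z0 D; have := dominance Z z0 D; lra.
exists ls; split => // x z.
have := rsum2_sq_eq0 (Rle_antisym _ _ HD0 (rsum2_sq_ge0 D)) x z; rewrite /D; lra.
Qed.

End Rewards.

Theorem mainTheorem4 (X Y Z : finType) (P : X -> Y -> Z -> R) :
  is_dist P ->
  (forall x : X, (0 < margX P x)%R) ->
  (UItilde P = 0%R <->
   forall (A : finType) (a0 : A) (u : X -> A -> R),
     (reward a0 (mu P) (margX P) u <= reward a0 (kappa P) (margX P) u)%R).
Proof.
move=> hP hX; case: (dist_inhabited_Z hP) => z0.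
rewrite (UI0_iff_garbling z0 hP); split.
- by move=> [lam hlam]; exact: (garbling_dominates hX hlam).
- exact: (blackwell hX z0).
Qed.
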